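(* If there exists a $(G,[k_1,\dots,k_t],\lambda)$ Hadamard partitioned difference family and $G$ has a subgroup of index $2$, then the Diophantine system $$x_1+\cdots+x_t=\lambda,\qquad 2x_1(k_1-x_1)+\cdots+2x_t(k_t-x_t)=\lambda^2$$ has an integer solution $(s_1,\dots,s_t)$ with $0\le s_i\le k_i$ for each $i$.
   Context: $G$ is a finite group written additively, with difference $x-y:=x+(-y)$. For $B\subseteq G$, $\Delta B$ is the multiset $\{x-y: x,y\in B, x\neq y\}$; for $\mathcal{F}=\{B_1,\dots,B_t\}$, $\Delta\mathcal{F}$ is the multiset union of the $\Delta B_i$. $\mathcal{F}$ is a $(G,[k_1,\dots,k_t],\lambda)$ partitioned difference family if the $B_i$ partition $G$, $|B_i|=k_i$, and $\Delta\mathcal{F}$ contains every non-zero element of $G$ exactly $\lambda$ times; it is Hadamard if $|G|=2\lambda$. *)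

From mathcomp Require Import all_boot all_fingroup.
Set Implicit Arguments. Unset Strict Implicit. Unset Printing Implicit Defensive.
Local Open Scope group_scope.

(* The group G is a finite group; the paper writes it additively, with
   x - y := x + (-y).  In MathComp's multiplicative notation this is x * y^-1. *)

Definition diff_count (gT : finGroupType) (B : {set gT}) (g : gT) : nat :=
  #|[set p in setX B B | (p.1 != p.2) && (p.1 * p.2^-1 == g)]|.

Definition is_PDF (gT : finGroupType) (G : {set gT}) (t : nat)
    (B : 'I_t -> {set gT}) (k : 'I_t -> nat) (lam : nat) : Prop :=
  [/\ forall i j : 'I_t, i != j -> [disjoint B i & B j],
      \bigcup_(i < t) B i = G,
      forall i : 'I_t, #|B i| = k i &
      forall g : gT, g \in G -> g != 1 -> (\sum_(i < t) diff_count (B i) g = lam)%N].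

Definition is_Hadamard_PDF (gT : finGroupType) (G : {set gT}) (t : nat)
    (B : 'I_t -> {set gT}) (k : 'I_t -> nat) (lam : nat) : Prop :=
  is_PDF G B k lam /\ #|G| = (2 * lam)%N.

(* Let H be a subgroup of index 2 and put s_i = |B_i ∩ H|.  Since the blocks
   partition G, the s_i add up to |H| = lambda.  An element g ∉ H is nonzero,
   so it occurs lambda times in Delta F; summing over the lambda elements of
   G \ H gives lambda^2.  On the other hand x - y ∉ H exactly when one of x, y
   lies in H, so block B_i contributes 2 s_i (k_i - s_i) differences outside H. *)
From mathcomp Require Import all_boot all_fingroup.
From mathcomp Require Import zify.

Lemma sum_card_setI_disjoint_cover (T : finType) (n : nat)
    (B : 'I_n -> {set T}) (A : {set T}) :
  (forall i j, i != j -> [disjoint B i & B j]) ->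
  A \subset \bigcup_(i < n) B i ->
  \sum_(i < n) #|B i :&: A| = #|A|.
Proof.
move=> disjB /subsetP sAB.
have cardIE i : #|B i :&: A| = \sum_(x in A) (x \in B i).
  rewrite -sum1_card (eq_bigl (fun x => (x \in A) && (x \in B i))) ?big_mkcondr.
    by apply: eq_bigr => x _; case: (x \in B i).
  by move=> x; rewrite inE andbC.
under eq_bigr do rewrite cardIE.
rewrite exchange_big -sum1_card; apply: eq_bigr => x /sAB /bigcupP[i _ xBi].
rewrite (bigD1 i) //= xBi big1 // => j ji.
by rewrite (disjointFl (disjB j i ji) xBi).
Qed.

Lemma sum_diff_count (gT : finGroupType) (B A : {set gT}) :
  (1 \notin A)%g ->
  \sum_(g in A) diff_count B g = #|[set p in setX B B | (p.1 * p.2^-1)%g \in A]|.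
Proof.
move=> A1; rewrite -sum1_card (partition_big (fun p => (p.1 * p.2^-1)%g) (mem A)).
  apply: eq_bigr => g Ag; rewrite sum1_card /diff_count; apply: eq_card => p.
  rewrite [in RHS]unfold_in /= !inE -!andbA.
  have [def_g | _] := eqVneq (p.1 * p.2^-1)%g g; last by rewrite !andbF.
  rewrite def_g Ag; congr [&& _, _, _ & _]; apply: contraNneq A1 => eq12.
  by move: Ag; rewrite -def_g eq12 mulgV.
by move=> p; rewrite inE => /andP[].
Qed.

Section IndexTwo.

Variables (gT : finGroupType) (G H : {group gT}).
Hypotheses (sHG : H \subset G) (iHG : #|G : H|%g = 2).

Lemma card_setD_index2 : #|G :\: H| = #|H|.
Proof. by rewrite cardsD (setIidPr sHG) -(Lagrange sHG) iHG; lia. Qed.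

Lemma index2_mulgV x y : x \in G -> y \in G ->
  ((x * y^-1)%g \in H) = ((x \in H) == (y \in H)).
Proof.
move=> Gx Gy; have [Hy | notHy] := boolP (y \in H); first by rewrite groupMr ?groupV.
have [Hx | notHx] := boolP (x \in H); first by rewrite groupMl // groupV (negbTE notHy).
have : x \in (H :* y)%g by rewrite (rcoset_index2 sHG iHG) !inE ?notHx ?notHy.
by rewrite mem_rcoset => ->.
Qed.

Lemma card_mulgV_outside_index2 (B : {set gT}) : B \subset G ->
  #|[set p in setX B B | (p.1 * p.2^-1)%g \in G :\: H]| = 2 * #|B :&: H| * #|B :\: H|.
Proof.
move=> /subsetP sBG.
have -> : [set p in setX B B | (p.1 * p.2^-1)%g \in G :\: H]
          = setX (B :&: H) (B :\: H) :|: setX (B :\: H) (B :&: H).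
  apply/setP => -[x y]; rewrite !inE /=.
  have [Bx | _] := boolP (x \in B); last by rewrite !andbF.
  have [By | _] := boolP (y \in B); last by rewrite !andbF.
  rewrite index2_mulgV ?groupM ?groupV ?sBG // andbT.
  by case: (x \in H); case: (y \in H).
rewrite cardsU !cardsX.
have -> : setX (B :&: H) (B :\: H) :&: setX (B :\: H) (B :&: H) = set0.
  by apply/setP => -[x y]; rewrite !inE; case: (x \in H); rewrite ?andbF.
by rewrite cards0; lia.
Qed.

End IndexTwo.

Theorem corollary5p2 (gT : finGroupType) (G : {group gT}) (t : nat)
    (k : 'I_t -> nat) (lam : nat) :
  (exists B : 'I_t -> {set gT}, is_Hadamard_PDF G B k lam) ->
  (exists H : {group gT}, H \subset G /\ #|G : H|%g = 2) ->
  exists s : 'I_t -> nat,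
    [/\ forall i, s i <= k i,
        \sum_(i < t) s i = lam &
        \sum_(i < t) 2 * s i * (k i - s i) = lam ^ 2].
Proof.
move=> [B [[disjB coverB cardB diffB] cardG]] [H [sHG iHG]].
have cardH : #|H| = lam by have := Lagrange sHG; rewrite iHG cardG; lia.
have sBG i : B i \subset G by rewrite -coverB (bigcup_sup i).
exists (fun i => #|B i :&: H|); split.
- by move=> i; rewrite -cardB subset_leq_card ?subsetIl.
- by rewrite sum_card_setI_disjoint_cover // coverB.
have lamGH g : g \in G :\: H -> \sum_(i < t) diff_count (B i) g = lam.
  by case/setDP => Gg notHg; apply: diffB => //; apply: contraNneq notHg => ->.
transitivity (\sum_(g in G :\: H) \sum_(i < t) diff_count (B i) g); last first.
  by rewrite (eq_bigr _ lamGH) sum_nat_const card_setD_index2 // cardH; lia.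
rewrite exchange_big; apply: eq_bigr => i _.
rewrite sum_diff_count ?card_mulgV_outside_index2 //; last by rewrite !inE group1.
by rewrite -cardB -(cardsID H (B i)) addKn.
Qed.
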